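(* Suppose that $U=L(0)\otimes A\oplus L(2)\otimes B$. The algebra $\mathrm{Ass}^{\mathrm{TKK}}(U)$ is the quotient of $\mathrm{Ass}(U)$ by the relations given by the $\mathfrak{sl}_2$-submodule in $U^{\otimes 2}$ generated by $(e\otimes B)\otimes T(L(0)\otimes A)\otimes (e\otimes B)$, where $e$ is the highest weight vector of $L(2)$.
   Context: We work over a field $k$ of characteristic zero. For $n\ge 0$, $L(n)$ denotes the irreducible $\mathfrak{sl}_2$-module of highest weight $n$; $L(0)$ is the trivial module and $L(2)$ is the adjoint module $\mathfrak{sl}_2$ with basis $e,f,h$. The category $\mathrm{TKK}$ has as objects the completely reducible $\mathfrak{sl}_2$-modules that are direct sums of copies of $L(0)$ and $L(2)$, i.e. $L(0)\otimes A\oplus L(2)\otimes B$ for multiplicity vector spaces $A,B$, and as morphisms $\mathfrak{sl}_2$-module maps. $\mathrm{Ass}(V)=T(V)$ is the free unital associative (tensor) algebra, and $\mathrm{Ass}^{\mathrm{TKK}}(U)$ is the free unital associative algebra in $\mathrm{TKK}$ generated by $U$ (left adjoint of the forgetful functor from associative algebras in $\mathrm{TKK}$ with $\mathfrak{sl}_2$-equivariant product), which is the quotient of $T(U)$ by the ideal generated by all $\mathfrak{sl}_2$-isotypic components $L(m)$ with $m\neq 0,2$. (The generating submodule lies in $U^{\otimes(s+2)}$ for the various degrees $s$ of the middle factor.) *)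

From HB Require Import structures.
From mathcomp Require Import all_boot all_order all_algebra.
Set Implicit Arguments. Unset Strict Implicit. Unset Printing Implicit Defensive.
Import Order.TTheory GRing.Theory Num.Theory.
Local Open Scope ring_scope.

Definition iE : 'I_3 := @Ordinal 3 0 isT.
Definition iH : 'I_3 := @Ordinal 3 1 isT.
Definition iF : 'I_3 := @Ordinal 3 2 isT.

Section TKK.
Variables (k : fieldType) (I J : eqType).

(* U = L(0) (x) A  (+)  L(2) (x) B, with A having basis I and B basis J.
   Letters = basis vectors of U:  inl i  = 1 (x) a_i,
                                  inr (j, t) = (basis vector t of sl2) (x) b_j. *)
Definition letter : eqType := (I + J * 'I_3)%type.

(* Elements of T(U) are represented by their coefficient functions on
   words (basis of T(U)); only finitely supported ones belong to T(U). *)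
Definition series := seq letter -> k.

Definition finsupp (p : series) : Prop :=
  exists s : seq (seq letter), forall w, w \notin s -> p w = 0.

(* indicator of a word = the tensor monomial *)
Definition wordf (u : seq letter) : series := fun w => (w == u)%:R.

(* product in T(U) (concatenation, extended bilinearly) *)
Definition mul (p q : series) : series :=
  fun w => \sum_(i < (size w).+1) p (take i w) * q (drop i w).

(* adjoint action on sl2 = L(2): coefficient of t' in [x, t] *)
Definition adj (x t t' : 'I_3) : k :=
  let c (a : k) (n : nat) := if val t' == n then a else 0 in
  match val x, val t with
  | 0%N, 1%N => c (- 2) 0%N      (* [e,h] = -2e *)
  | 0%N, 2%N => c 1 1%N          (* [e,f] = h   *)
  | 1%N, 0%N => c 2 0%N          (* [h,e] = 2e  *)
  | 1%N, 2%N => c (- 2) 2%N      (* [h,f] = -2f *)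
  | 2%N, 0%N => c (- 1) 1%N      (* [f,e] = -h  *)
  | 2%N, 1%N => c 2 2%N          (* [f,h] = 2f  *)
  | _, _ => 0
  end.

(* action of x in sl2 on T(U), by derivations (L(0) factors are trivial):
   coefficient of the word w in x . p *)
Definition act (x : 'I_3) (p : series) : series :=
  fun w => \sum_(n < size w)
    match drop n w with
    | inr (j, t) :: rest =>
        \sum_(t' < 3) adj x t' t * p (take n w ++ inr (j, t') :: rest)
    | _ => 0
    end.

Inductive lin_span (S : series -> Prop) : series -> Prop :=
| ls_gen p : S p -> lin_span S p
| ls_zero : lin_span S (fun _ => 0)
| ls_add p q : lin_span S p -> lin_span S q -> lin_span S (fun w => p w + q w)
| ls_scale c p : lin_span S p -> lin_span S (fun w => c * p w)
| ls_ext p q : (forall w, p w = q w) -> lin_span S p -> lin_span S q.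

Inductive submod_gen (S : series -> Prop) : series -> Prop :=
| sm_gen p : S p -> submod_gen S p
| sm_zero : submod_gen S (fun _ => 0)
| sm_add p q : submod_gen S p -> submod_gen S q -> submod_gen S (fun w => p w + q w)
| sm_scale c p : submod_gen S p -> submod_gen S (fun w => c * p w)
| sm_act x p : submod_gen S p -> submod_gen S (act x p)
| sm_ext p q : (forall w, p w = q w) -> submod_gen S p -> submod_gen S q.

Inductive ideal_gen (S : series -> Prop) : series -> Prop :=
| id_gen p : S p -> ideal_gen S p
| id_zero : ideal_gen S (fun _ => 0)
| id_add p q : ideal_gen S p -> ideal_gen S q -> ideal_gen S (fun w => p w + q w)
| id_scale c p : ideal_gen S p -> ideal_gen S (fun w => c * p w)
| id_mull a p : finsupp a -> ideal_gen S p -> ideal_gen S (mul a p)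
| id_mulr a p : finsupp a -> ideal_gen S p -> ideal_gen S (mul p a)
| id_ext p q : (forall w, p w = q w) -> ideal_gen S p -> ideal_gen S q.

(* An sl2-module map L(m) -> T(U), given by the images phi 0, ..., phi m of
   the standard basis v_0,...,v_m of L(m):
     h v_i = (m - 2i) v_i,  f v_i = v_(i+1) (v_(m+1) = 0),
     e v_i = i (m - i + 1) v_(i-1) (v_(-1) = 0). *)
Definition is_Lhom (m : nat) (phi : nat -> series) : Prop :=
  forall i, (i <= m)%N ->
    [/\ finsupp (phi i),
        forall w, act iH (phi i) w = (m%:R - (2 * i)%:R) * phi i w,
        forall w, act iF (phi i) w = (if (i < m)%N then phi i.+1 w else 0)
      & forall w, act iE (phi i) w =
                  (if i is i'.+1 then (i * (m - i + 1))%:R * phi i' w else 0)].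

(* L(m)-isotypic component of T(U): sum of all submodules isomorphic to
   L(m) = span of the images of all module maps L(m) -> T(U). *)
Definition isotypic (m : nat) : series -> Prop :=
  lin_span (fun q => exists phi, is_Lhom m phi /\ exists2 i, (i <= m)%N & q = phi i).

Definition tkk_ideal : series -> Prop :=
  ideal_gen (fun p => exists m, [/\ m <> 0%N, m <> 2%N & isotypic m p]).

Definition eBAeB : series -> Prop :=
  fun p => exists j j' (u : seq I),
    p = wordf (inr (j, iE) :: map inl u ++ [:: inr (j', iE)]).

End TKK.

(* A module map L(m) -> T(U) sends the highest weight vector v_0 to an
   h-eigenvector of weight m, and h acts on a word by 2 (#e-letters - #f-letters).
   In characteristic 0 every word in the support of the image of v_0 therefore has
   at least two more e-letters than f-letters when m <> 0, 2, so it contains two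
   e-letters separated only by A-letters and h-letters.  Such a word lies in the
   ideal by induction on the number of those h-letters, since the image of a
   generator under f is -(h b A e b' + e b A h b').  The rest of the image is
   reached by applying f, and the ideal is sl2-stable because sl2 acts on T(U) by
   derivations.  Conversely each generator (e b) A (e b') is the highest weight
   vector of a copy of L(4) in T(U), spanned by its f-iterates. *)

From Pilot Require Import Defs.
From mathcomp Require Import all_boot all_order all_algebra.
From mathcomp Require Import ring zify.
Set Implicit Arguments. Unset Strict Implicit. Unset Printing Implicit Defensive.
Import GRing.Theory.
Local Open Scope ring_scope.

Lemma ord3P (t : 'I_3) : [\/ t = iE, t = iH | t = iF].
Proof.
case: t => [[|[|[|n]]] lt_t3] //; [constructor 1|constructor 2|constructor 3]; exact: val_inj.
Qed.

Lemma big_ord3 (R : nmodType) (F : 'I_3 -> R) : \sum_(t < 3) F t = F iE + F iH + F iF.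
Proof.
rewrite !big_ord_recl big_ord0 addr0 addrA; congr (F _ + F _ + F _); exact: val_inj.
Qed.

Lemma pchar0_natr_inj (R : idomainType) :
  [pchar R] =i pred0 -> injective (fun n : nat => n%:R : R).
Proof.
move/pcharf0P=> char0; suff le_nat m n : m%:R = n%:R :> R -> (m <= n)%N.
  by move=> m n eq_mn; apply/eqP; rewrite eqn_leq !le_nat.
move=> eq_mn; rewrite -subn_eq0 -char0; case: (leqP m n) => [le_mn | lt_nm].
  by rewrite (eqP le_mn).
by rewrite natrB ?(ltnW lt_nm) // eq_mn subrr.
Qed.

Section TensorAlgebra.
Variables (k : fieldType) (I J : eqType).
Local Notation series := (series k I J).
Local Notation letter := (letter I J).
Local Notation tmul := (@Defs.mul k I J).
Local Notation word := (@wordf k I J).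
Local Notation bl j t := (inr (j, t)).

Lemma eq_tmul (p p' q q' : series) : p =1 p' -> q =1 q' -> tmul p q =1 tmul p' q'.
Proof. by move=> eq_p eq_q w; apply: eq_bigr => i _; rewrite eq_p eq_q. Qed.

Lemma tmul_nil (p q : series) : tmul p q [::] = p [::] * q [::].
Proof. by rewrite /Defs.mul big_ord_recl big_ord0 addr0. Qed.

Lemma tmul_cons (p q : series) l w :
  tmul p q (l :: w) = p [::] * q (l :: w) + tmul (fun v => p (l :: v)) q w.
Proof. by rewrite /Defs.mul /= big_ord_recl. Qed.

Lemma tmulDl (p p' q : series) :
  tmul (fun v => p v + p' v) q =1 fun w => tmul p q w + tmul p' q w.
Proof. by move=> w; rewrite /Defs.mul -big_split; apply: eq_bigr => i _; rewrite mulrDl. Qed.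

Lemma tmulDr (p q q' : series) :
  tmul p (fun v => q v + q' v) =1 fun w => tmul p q w + tmul p q' w.
Proof. by move=> w; rewrite /Defs.mul -big_split; apply: eq_bigr => i _; rewrite mulrDr. Qed.

Lemma tmulZl c (p q : series) : tmul (fun v => c * p v) q =1 fun w => c * tmul p q w.
Proof. by move=> w; rewrite /Defs.mul big_distrr; apply: eq_bigr => i _; rewrite -mulrA. Qed.

Lemma tmulZr c (p q : series) : tmul p (fun v => c * q v) =1 fun w => c * tmul p q w.
Proof. by move=> w; rewrite /Defs.mul big_distrr; apply: eq_bigr => i _; rewrite mulrCA. Qed.

Lemma tmul0 (p q : series) : p =1 (fun _ => 0) -> tmul p q =1 (fun _ => 0).
Proof. by move=> p0 w; rewrite /Defs.mul big1 // => i _; rewrite p0 mul0r. Qed.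

Lemma tmul_suml (T : Type) (r : seq T) (c : T -> k) (F : T -> series) q :
  tmul (fun v => \sum_(t <- r) c t * F t v) q =1 fun w => \sum_(t <- r) c t * tmul (F t) q w.
Proof.
move=> w; rewrite /Defs.mul; under eq_bigr do rewrite big_distrl.
rewrite exchange_big; apply: eq_bigr => t _; rewrite big_distrr.
by apply: eq_bigr => i _; exact: esym (mulrA _ _ _).
Qed.

Lemma word_cons l' v l w : word (l' :: v) (l :: w) = (l == l')%:R * word v w.
Proof. by rewrite /wordf eqseq_cons; case: (l == l'); rewrite ?mul1r ?mul0r. Qed.

Lemma tmul_word u v : tmul (word u) (word v) =1 word (u ++ v).
Proof.
elim: u => [|a u IH] [|l w].
- by rewrite tmul_nil /wordf /= mul1r.
- by rewrite tmul_cons /= (@tmul0 (fun v => word [::] (l :: v))) // /wordf /= mul1r addr0.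
- by rewrite tmul_nil /wordf mul0r.
rewrite tmul_cons /= [word _ [::]]/wordf mul0r add0r.
by rewrite (eq_tmul (fun v => word_cons a u l v) (frefl _)) tmulZl IH word_cons.
Qed.

Lemma finsupp_word u : finsupp (word u).
Proof. by exists [:: u] => w; rewrite inE /wordf => /negPf ->. Qed.

Lemma eq_act x (p q : series) : p =1 q -> act x p =1 act x q.
Proof.
move=> eq_pq w; apply: eq_bigr => n _.
by case: (drop n w) => [|[a|[j t]] r] //; apply: eq_bigr => t' _; rewrite eq_pq.
Qed.

Lemma act0 x (p : series) : p =1 (fun _ => 0) -> act x p =1 (fun _ => 0).
Proof.
move=> p0 w; rewrite /act big1 // => n _.
by case: (drop n w) => [|[a|[j t]] r] //; rewrite big1 // => t' _; rewrite p0 mulr0.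
Qed.

Lemma actD x (p q : series) : act x (fun v => p v + q v) =1 fun w => act x p w + act x q w.
Proof.
move=> w; rewrite /act -big_split; apply: eq_bigr => n _ /=.
case: (drop n w) => [|[a|[j t]] r] /=; rewrite ?addr0 //.
by rewrite -big_split; apply: eq_bigr => t' _; rewrite mulrDr.
Qed.

Lemma actZ x c (p : series) : act x (fun v => c * p v) =1 fun w => c * act x p w.
Proof.
move=> w; rewrite /act big_distrr; apply: eq_bigr => n _ /=.
case: (drop n w) => [|[a|[j t]] r] /=; rewrite ?mulr0 //.
by rewrite big_distrr; apply: eq_bigr => t' _; rewrite mulrCA.
Qed.

Lemma act_nil x (p : series) : act x p [::] = 0.
Proof. by rewrite /act big_ord0. Qed.

Definition act_head x (p : series) (l : letter) (w : seq letter) : k :=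
  if l is bl j t then \sum_(t' < 3) adj k x t' t * p (bl j t' :: w) else 0.

Lemma act_cons x (p : series) l w :
  act x p (l :: w) = act_head x p l w + act x (fun v => p (l :: v)) w.
Proof. by rewrite /act /= big_ord_recl. Qed.

Lemma act_head_tmul x (a p : series) l :
  act_head x (tmul a p) l =1 fun w => tmul (act_head x a l) p w + a [::] * act_head x p l w.
Proof.
move=> w; case: l => [b|[j t]] /=; first by rewrite tmul0 // mulr0 addr0.
under eq_bigr do rewrite tmul_cons mulrDr.
rewrite big_split /= addrC tmul_suml; congr (_ + _).
by rewrite big_distrr; apply: eq_bigr => t' _; rewrite mulrCA.
Qed.

Lemma act_tmul x (a p : series) :
  act x (tmul a p) =1 fun w => tmul (act x a) p w + tmul a (act x p) w.
Proof.
move=> w; elim: w a => [|l w IH] a.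
  by rewrite act_nil !tmul_nil !act_nil mul0r mulr0 addr0.
rewrite act_cons (eq_act _ (tmul_cons a p l)) actD actZ IH act_head_tmul.
rewrite tmul_cons act_nil mul0r add0r tmul_cons act_cons.
rewrite (eq_tmul (fun v => act_cons x a l v) (frefl p)) tmulDl; ring.
Qed.

Lemma finsupp_act x (p : series) : finsupp p -> finsupp (act x p).
Proof.
case=> s supp_s.
pose relabel (v : seq letter) n (t : 'I_3) : seq letter :=
  if drop n v is bl j _ :: r then take n v ++ bl j t :: r else v.
exists [seq relabel vn.1 vn.2 t
         | vn <- [seq (v, n) | v <- s, n <- iota 0 (size v)], t <- enum 'I_3].
move=> w w_out; rewrite /act big1 // => n _.
case E: (drop n w) => [|[b|[j t]] r] //; rewrite big1 // => t' _.
set v := take n w ++ bl j t' :: r.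
suff -> : p v = 0 by rewrite mulr0.
apply: supp_s; apply: contra w_out => v_s.
have lt_nw : (n < size w)%N by rewrite -subn_gt0 -size_drop E.
have size_take : size (take n w) = n by rewrite size_takel // ltnW.
have <- : relabel v n t = w.
  by rewrite /relabel /v drop_size_cat // take_size_cat // -E cat_take_drop.
apply/allpairsPdep; exists (v, nat_of_ord n), t; split; rewrite ?mem_enum //.
apply/allpairsPdep; exists v, (nat_of_ord n); split => //.
by rewrite mem_iota add0n /v size_cat /= size_take addnS ltnS leq_addr.
Qed.

Lemma act_sum (T : Type) x (r : seq T) (F : T -> series) :
  act x (fun v => \sum_(i <- r) F i v) =1 fun w => \sum_(i <- r) act x (F i) w.
Proof.
elim: r => [|i r IH] w.
  by under eq_act do rewrite big_nil; rewrite big_nil act0.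
under eq_act do rewrite big_cons.
by rewrite actD big_cons IH.
Qed.

Lemma bl_eqE j t j' t' : (bl j t == bl j' t' :> letter) = (j == j') && (t == t').
Proof. by rewrite -sum_eqE /= xpair_eqE. Qed.

Definition ad_letter x (l' l : letter) : k :=
  if l' is bl j' t' then if l is bl j t then (j == j')%:R * adj k x t' t else 0 else 0.

Lemma act_word_cons x l' v l w :
  act x (word (l' :: v)) (l :: w) =
  ad_letter x l' l * (w == v)%:R + (l == l')%:R * act x (word v) w.
Proof.
rewrite act_cons (eq_act _ (fun u => word_cons l' v l u)) actZ /ad_letter; congr (_ + _).
case: l => [b|[j t]] /=; first by case: l' => [?|[? ?]]; rewrite mul0r.
case: l' => [b'|[j' t']] /=.
  by rewrite mul0r big1 // => s _; rewrite word_cons -sum_eqE mul0r mulr0.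
rewrite (bigD1 t') //= big1 ?addr0 => [|s /negPf neq_st].
  rewrite word_cons bl_eqE eqxx andbT /wordf.
  by case: (j == j'); rewrite ?mul0r ?mul1r ?mulr1 ?mulr0.
by rewrite word_cons bl_eqE neq_st andbF mul0r mulr0.
Qed.

Lemma act_word_nil x : act x (word [::]) =1 (fun _ => 0).
Proof.
case=> [|l w]; first exact: act_nil.
rewrite act_cons act0 // addr0.
by case: l => [b|[j t]] //=; rewrite big1 // => t' _; rewrite mulr0.
Qed.

Lemma sum_word_bl (c : 'I_3 -> k) (g : 'I_3 -> seq letter) j l w :
  \sum_(t < 3) c t * word (bl j t :: g t) (l :: w) =
  if l is bl j1 t1 then (j1 == j)%:R * c t1 * word (g t1) w else 0.
Proof.
case: l => [b|[j1 t1]].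
  by rewrite big1 // => t _; rewrite word_cons -sum_eqE mul0r mulr0.
rewrite (bigD1 t1) //= big1 ?addr0 => [|t /negPf neq_t].
  by rewrite word_cons bl_eqE eqxx andbT mulrCA mulrA.
by rewrite word_cons bl_eqE [t1 == _]eq_sym neq_t andbF mul0r mulr0.
Qed.

Lemma act_word_inl_bl x u j' Y :
  act x (word (map inl u ++ [:: bl j' Y])) =1
  fun w => \sum_(t < 3) adj k x Y t * word (map inl u ++ [:: bl j' t]) w.
Proof.
elim: u => [|b u IH] [|l w] /=.
- by rewrite act_nil big1 // => t _; rewrite mulr0.
- rewrite act_word_cons act_word_nil mulr0 addr0.
  rewrite (sum_word_bl (adj k x Y) (fun _ => [::])).
  by case: l => [b|[j1 t1]] /=; rewrite ?mul0r // /wordf mulrAC.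
- by rewrite act_nil big1 // => t _; rewrite mulr0.
rewrite act_word_cons IH mul0r add0r big_distrr.
by apply: eq_bigr => t _; rewrite word_cons mulrCA.
Qed.

Definition bAb_word j X (u : seq I) j' Y : seq letter := bl j X :: map inl u ++ [:: bl j' Y].

Lemma act_bAb x j X u j' Y :
  act x (word (bAb_word j X u j' Y)) =1 fun w =>
    \sum_(t < 3) adj k x X t * word (bAb_word j t u j' Y) w +
    \sum_(t < 3) adj k x Y t * word (bAb_word j X u j' t) w.
Proof.
case=> [|l w].
  by rewrite act_nil !big1 ?addr0 // => t _; rewrite /wordf mulr0.
rewrite act_word_cons act_word_inl_bl.
rewrite (sum_word_bl (adj k x X) (fun _ => map inl u ++ [:: bl j' Y])); congr (_ + _).
  by case: l => [b|[j1 t1]] /=; rewrite ?mul0r.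
by rewrite big_distrr; apply: eq_bigr => t _; rewrite word_cons mulrCA.
Qed.

(** * A copy of L(4) through each generator *)

Definition sandwich j (u : seq I) j' (C : 'M[k]_3) : series :=
  fun w => \sum_(X < 3) \sum_(Y < 3) C X Y * word (bAb_word j X u j' Y) w.

Definition ad_mx x : 'M[k]_3 := \matrix_(t, t') adj k x t t'.

Local Notation ad_on x C := ((ad_mx x)^T *m C + C *m ad_mx x).

Lemma act_sandwich x j u j' C : act x (sandwich j u j' C) =1 sandwich j u j' (ad_on x C).
Proof.
move=> w; rewrite /sandwich act_sum.
under eq_bigr do rewrite act_sum.
under eq_bigr do under eq_bigr do rewrite actZ act_bAb mulrDr !big_distrr /=.
under [RHS]eq_bigr do under eq_bigr do rewrite !mxE mulrDl !big_distrl /=.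
under eq_bigr do rewrite big_split /=; rewrite big_split /=.
under [RHS]eq_bigr do rewrite big_split /=; rewrite [RHS]big_split /=.
congr (_ + _).
  rewrite [RHS]exchange_big; under [RHS]eq_bigr do rewrite exchange_big.
  rewrite [RHS]exchange_big; apply: eq_bigr => X _; apply: eq_bigr => Y _.
  by apply: eq_bigr => t _; rewrite !mxE mulrCA mulrA.
under [RHS]eq_bigr do rewrite exchange_big.
apply: eq_bigr => X _; apply: eq_bigr => Y _; apply: eq_bigr => t _.
by rewrite !mxE mulrA.
Qed.

Lemma sandwichZ a j u j' C : sandwich j u j' (a *: C) =1 fun w => a * sandwich j u j' C w.
Proof.
move=> w; rewrite /sandwich big_distrr; apply: eq_bigr => X _.
by rewrite big_distrr; apply: eq_bigr => Y _; rewrite mxE /= mulrA.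
Qed.

Lemma finsupp_sandwich j u j' C : finsupp (sandwich j u j' C).
Proof.
exists [seq bAb_word j X u j' Y | X <- enum 'I_3, Y <- enum 'I_3] => w w_out.
rewrite /sandwich big1 // => X _; rewrite big1 // => Y _.
have bAb_in : bAb_word j X u j' Y \in [seq bAb_word j X u j' Y | X <- enum 'I_3, Y <- enum 'I_3].
  by apply: allpairs_f; rewrite mem_enum.
by rewrite /wordf; case: eqP => [eq_w|_]; rewrite ?mulr0 //; rewrite eq_w bAb_in in w_out.
Qed.

Lemma sandwich0 j u j' : sandwich j u j' 0 =1 (fun _ => 0).
Proof. by move=> w; rewrite -(scale0r 0) sandwichZ mul0r. Qed.

(* Coefficients of f^i (e (x) e) in the basis (e, h, f) (x) (e, h, f) of sl2 (x) sl2. *)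
Definition ee_orbit_mx (i : nat) : 'M[k]_3 := \matrix_(X, Y)
  match i, val X, val Y with
  | 0%N, 0%N, 0%N => 1
  | 1%N, 1%N, 0%N | 1%N, 0%N, 1%N => -1
  | 2%N, 1%N, 1%N => 2
  | 2%N, 2%N, 0%N | 2%N, 0%N, 2%N => -2
  | 3%N, 2%N, 1%N | 3%N, 1%N, 2%N => 6
  | 4%N, 2%N, 2%N => 24
  | _, _, _ => 0
  end.

Ltac solve_3x3 :=
  apply/matrixP; let X := fresh "X" in let Y := fresh "Y" in
  move=> X Y; rewrite !mxE !big_ord3 !mxE;
  case: (ord3P X) => ->; case: (ord3P Y) => ->; rewrite /adj /=; ring.

Lemma ee_orbit_h i : (i <= 4)%N ->
  ad_on iH (ee_orbit_mx i) = (4%:R - (2 * i)%:R) *: ee_orbit_mx i.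
Proof. by case: i => [|[|[|[|[|i]]]]] // _; solve_3x3. Qed.

Lemma ee_orbit_f i : (i <= 4)%N ->
  ad_on iF (ee_orbit_mx i) = if (i < 4)%N then ee_orbit_mx i.+1 else 0.
Proof. by case: i => [|[|[|[|[|i]]]]] // _; solve_3x3. Qed.

Lemma ee_orbit_e i : (i <= 4)%N ->
  ad_on iE (ee_orbit_mx i) =
  if i is i'.+1 then (i * (4 - i + 1))%:R *: ee_orbit_mx i' else 0.
Proof. by case: i => [|[|[|[|[|i]]]]] // _; rewrite ?subSS ?subn0; solve_3x3. Qed.

Lemma ee_orbit_Lhom j u j' : is_Lhom 4 (fun i => sandwich j u j' (ee_orbit_mx i)).
Proof.
move=> i le_i4; split=> [|w|w|w]; rewrite ?act_sandwich.
- exact: finsupp_sandwich.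
- by rewrite ee_orbit_h // sandwichZ.
- by rewrite ee_orbit_f //; case: (i < 4)%N; rewrite ?sandwich0.
- by rewrite ee_orbit_e //; case: i {le_i4} => [|i]; rewrite ?sandwich0 ?sandwichZ.
Qed.

Lemma sandwich_delta j u j' X Y : sandwich j u j' (delta_mx X Y) =1 word (bAb_word j X u j' Y).
Proof.
move=> w; rewrite /sandwich (bigD1 X) //= addrC big1 ?add0r => [|X' /negPf neq_X'X].
  rewrite (bigD1 Y) //= addrC big1 ?add0r => [|Y' /negPf neq_Y'Y].
    by rewrite mxE !eqxx mul1r.
  by rewrite mxE eqxx neq_Y'Y mul0r.
by rewrite big1 // => Y' _; rewrite mxE neq_X'X mul0r.
Qed.

Lemma ee_orbit_mx0 : ee_orbit_mx 0 = delta_mx iE iE.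
Proof. by apply/matrixP => X Y; rewrite !mxE; case: (ord3P X) => ->; case: (ord3P Y) => ->. Qed.

Lemma isotypic_Lhom m phi i : is_Lhom m phi -> (i <= m)%N -> @isotypic k I J m (phi i).
Proof. by move=> phi_hom le_im; apply: ls_gen; exists phi; split=> //; exists i. Qed.

Lemma isotypic_act m x (q : series) : isotypic m q -> isotypic m (act x q).
Proof.
elim=> {q} [q [phi [phi_hom [i le_im ->]]]| |p q _ IHp _ IHq|c p _ IHp|p q eq_pq _ IHp].
- have [_ act_h act_f act_e] := phi_hom i le_im.
  case: (ord3P x) => ->.
  + case: i le_im act_e {act_h act_f} => [|i] le_im act_e.
      by apply: (ls_ext _ (ls_zero _)) => w; rewrite act_e.
    by apply: (ls_ext _ (ls_scale _ (isotypic_Lhom phi_hom (ltnW le_im)))) => w; rewrite act_e.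
  + by apply: (ls_ext _ (ls_scale _ (isotypic_Lhom phi_hom le_im))) => w; rewrite act_h.
  + case: (ltnP i m) => [lt_im|le_mi]; last first.
      by apply: (ls_ext _ (ls_zero _)) => w; rewrite act_f ltnNge le_mi.
    by apply: (ls_ext _ (isotypic_Lhom phi_hom lt_im)) => w; rewrite act_f lt_im.
- by apply: (ls_ext _ (ls_zero _)) => w; rewrite act0.
- by apply: (ls_ext _ (ls_add IHp IHq)) => w; rewrite actD.
- by apply: (ls_ext _ (ls_scale c IHp)) => w; rewrite actZ.
- by apply: ls_ext IHp; apply: eq_act.
Qed.

Lemma submod_eBAeB_isotypic4 (q : series) : submod_gen (@eBAeB k I J) q -> isotypic 4 q.
Proof.
elim=> {q} [q [j [j' [u ->]]]| |p q _ IHp _ IHq|c p _ IHp|x p _ IHp|p q eq_pq _ IHp].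
- apply: (ls_ext _ (@isotypic_Lhom 4 _ 0 (ee_orbit_Lhom j u j') isT)) => w.
  by rewrite ee_orbit_mx0 sandwich_delta.
- exact: ls_zero.
- exact: ls_add.
- exact: ls_scale.
- exact: isotypic_act.
- exact: ls_ext eq_pq IHp.
Qed.

Lemma ideal_gen_sub S S' (p : series) :
  (forall q, S q -> ideal_gen S' q) -> ideal_gen S p -> ideal_gen S' p.
Proof.
move=> SS'; elim=> {p} [p /SS' //| | p q _ IHp _ IHq | c p _ IHp
                      | a p a_fin _ IHp | a p a_fin _ IHp | p q eq_pq _ IHp].
- exact: id_zero.
- exact: id_add.
- exact: id_scale.
- exact: id_mull.
- exact: id_mulr.
- exact: id_ext eq_pq IHp.
Qed.

Lemma lin_span_ideal_gen T S (p : series) :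
  (forall q, T q -> ideal_gen S q) -> lin_span T p -> ideal_gen S p.
Proof.
move=> TS; elim=> {p} [p /TS //| | p q _ IHp _ IHq | c p _ IHp | p q eq_pq _ IHp].
- exact: id_zero.
- exact: id_add.
- exact: id_scale.
- exact: id_ext eq_pq IHp.
Qed.

Lemma ideal_gen_act (S : series -> Prop) :
  (forall x p, S p -> S (act x p)) -> forall x p, ideal_gen S p -> ideal_gen S (act x p).
Proof.
move=> S_act x p; elim=> {p} [p Sp| | p q _ IHp _ IHq | c p _ IHp
                            | a p a_fin Ip IHp | a p a_fin Ip IHp | p q eq_pq _ IHp].
- exact/id_gen/S_act.
- by apply: (id_ext _ (id_zero _)) => w; rewrite act0.
- by apply: (id_ext _ (id_add IHp IHq)) => w; rewrite actD.
- by apply: (id_ext _ (id_scale c IHp)) => w; rewrite actZ.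
- apply: (id_ext _ (id_add (id_mull (finsupp_act x a_fin) Ip) (id_mull a_fin IHp))) => w.
  by rewrite act_tmul.
- apply: (id_ext _ (id_add (id_mulr a_fin IHp) (id_mulr (finsupp_act x a_fin) Ip))) => w.
  by rewrite act_tmul.
- by apply: (id_ext _ IHp); apply: eq_act.
Qed.

Lemma ideal_gen_word_mul S x y (q : series) :
  ideal_gen S q -> ideal_gen S (tmul (word x) (tmul q (word y))).
Proof. by move=> Iq; apply/id_mull/id_mulr/Iq; apply: finsupp_word. Qed.

Lemma ideal_gen_finsupp S (p : series) :
  finsupp p -> (forall u, p u != 0 -> ideal_gen S (word u)) -> ideal_gen S p.
Proof.
case=> s; elim: s p => [|u s IHs] p supp_p Iwords.
  by apply: (id_ext _ (id_zero _)) => w; rewrite supp_p.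
pose p' w := if w == u then 0 else p w.
have Ip' : ideal_gen S p'.
  apply: IHs => [w w_s|v]; rewrite /p'.
    by case: (w =P u) => // /eqP neq_wu; apply: supp_p; rewrite inE negb_or neq_wu.
  by case: (v =P u) => [_|_]; [rewrite eqxx | exact: Iwords].
have Iu : ideal_gen S (fun w => p u * word u w).
  have [->|pu_neq0] := eqVneq (p u) 0.
    by apply: (id_ext _ (id_zero _)) => w; rewrite mul0r.
  exact/id_scale/Iwords.
apply: (id_ext _ (id_add Iu Ip')) => w.
by rewrite /p' /wordf; case: eqP => [->|_]; rewrite ?mulr1 ?addr0 ?mulr0 ?add0r.
Qed.

(** * Words with two more e-letters than f-letters *)

Definition is_e (l : letter) : bool := if l is bl _ t then t == iE else false.
Definition is_f (l : letter) : bool := if l is bl _ t then t == iF else false.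
Definition weight0 (l : letter) : bool := if l is bl _ t then t == iH else true.

Lemma act_h (p : series) :
  act iH p =1 fun w => ((2 * count is_e w)%:R - (2 * count is_f w)%:R) * p w.
Proof.
move=> w; elim: w p => [|l w IH] p; first by rewrite act_nil subrr mul0r.
rewrite act_cons IH; case: l => [a|[j t]] /=; first by rewrite add0r.
rewrite big_ord3 !mulnDr !natrD; case: (ord3P t) => ->; rewrite /adj /=; ring.
Qed.

Fixpoint starts_with_e (w : seq letter) : bool :=
  if w is l :: w' then (if weight0 l then starts_with_e w' else is_e l) else false.

Lemma starts_with_eP w : starts_with_e w ->
  exists m j y, all weight0 m /\ w = m ++ bl j iE :: y.
Proof.
elim: w => [|l w IH] //=; case wt0_l: (weight0 l).
  by case/IH=> [m [j [y [wt0_m ->]]]]; exists (l :: m), j, y; rewrite /= wt0_l.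
by case: l wt0_l => [//|[j t]] /= _ /eqP ->; exists [::], j, w.
Qed.

Definition has_e_pair (w : seq letter) : Prop :=
  exists x j m j' y, all weight0 m /\ w = x ++ bl j iE :: m ++ bl j' iE :: y.

Lemma has_e_pair_or_count w :
  has_e_pair w \/ (count is_e w <= count is_f w + starts_with_e w)%N.
Proof.
elim: w => [|l w [[x [j [m [j' [y [wt0_m ->]]]]]] | IH]]; first by right.
  by left; exists (l :: x), j, m, j', y.
case: l => [a|[j t]] /=; first by right.
case: (ord3P t) => ->; rewrite /iE /iH /iF /=; [|by right|].
  case sw: (starts_with_e w); last by right; rewrite sw /= in IH; lia.
  by left; have [m [j' [y [wt0_m ->]]]] := starts_with_eP sw; exists [::], j, m, j', y.
by right; case: (starts_with_e w) IH => /= IH; lia.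
Qed.

Lemma has_e_pair_count w : (count is_f w + 2 <= count is_e w)%N -> has_e_pair w.
Proof. by case: (has_e_pair_or_count w) => // le_ef; case: (starts_with_e w) le_ef; lia. Qed.

Lemma weight0_split_last_h m : all weight0 m ->
  (exists u, m = map inl u) \/ exists u j v, all weight0 u /\ m = u ++ bl j iH :: map inl v.
Proof.
elim: m => [|l m IH] /=; first by left; exists [::].
case/andP=> wt0_l /IH [[u ->]|[u [j [v [wt0_u ->]]]]].
  case: l wt0_l => [a _|[j t] /eqP ->]; first by left; exists (a :: u).
  by right; exists [::], j, u.
by right; exists (l :: u), j, v; rewrite /= wt0_l wt0_u.
Qed.

Local Notation eBAeB_ideal := (ideal_gen (submod_gen (@eBAeB k I J))).

Lemma eBAeB_ideal_word x j u j' y : eBAeB_ideal (word (x ++ bAb_word j iE u j' iE ++ y)).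
Proof.
have gen : submod_gen (@eBAeB k I J) (word (bAb_word j iE u j' iE)).
  by apply: sm_gen; exists j, j', u.
apply: (id_ext _ (ideal_gen_word_mul x y (id_gen gen))) => w.
by rewrite (eq_tmul (frefl _) (tmul_word _ _)) tmul_word.
Qed.

Lemma act_f_bAb_ee j u j' :
  act iF (word (bAb_word j iE u j' iE)) =1
  fun w => -1 * (word (bAb_word j iH u j' iE) w + word (bAb_word j iE u j' iH) w).
Proof. by move=> w; rewrite act_bAb !big_ord3 /adj /= !mul0r !addr0 !add0r mulrDr. Qed.

(* The image under f of the generator between x and y. *)
Lemma eBAeB_ideal_h_shift x j u j' y :
  eBAeB_ideal (fun w => word (x ++ bAb_word j iH u j' iE ++ y) w +
                        word (x ++ bAb_word j iE u j' iH ++ y) w).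
Proof.
have gen : submod_gen (@eBAeB k I J) (act iF (word (bAb_word j iE u j' iE))).
  by apply/sm_act/sm_gen; exists j, j', u.
apply: (id_ext _ (id_scale (-1) (ideal_gen_word_mul x y (id_gen gen)))) => w.
rewrite (eq_tmul (frefl _) (eq_tmul (act_f_bAb_ee j u j') (frefl _))).
rewrite (eq_tmul (frefl _) (tmulZl _ _ _)) tmulZr.
rewrite (eq_tmul (frefl _) (tmulDl _ _ _)) tmulDr.
by rewrite !(eq_tmul (frefl _) (tmul_word _ _)) !tmul_word mulrA mulN1r opprK mul1r.
Qed.

Lemma eBAeB_ideal_e_pair x j m j' y :
  all weight0 m -> eBAeB_ideal (word (x ++ bl j iE :: m ++ bl j' iE :: y)).
Proof.
have [n] := ubnP (size m); elim: n => // n IHn in x j m j' y *; rewrite ltnS => le_mn.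
case/weight0_split_last_h => [[u ->]|[u [j2 [v [wt0_u eq_m]]]]].
  by apply: (id_ext _ (eBAeB_ideal_word x j u j' y)) => w; rewrite /bAb_word /= -catA.
have lt_un : (size u < n)%N by apply: leq_trans le_mn; rewrite eq_m size_cat /= addnS ltnS leq_addr.
have Iu := IHn x j u j2 (map inl v ++ bl j' iH :: y) lt_un wt0_u.
have Ishift := eBAeB_ideal_h_shift (x ++ bl j iE :: u) j2 v j' y.
apply: (id_ext _ (id_add (id_scale (-1) Iu) Ishift)) => w.
rewrite eq_m /bAb_word -!catA /= -!catA /=; ring.
Qed.

Lemma eBAeB_ideal_heavy_word w :
  (count is_f w + 2 <= count is_e w)%N -> eBAeB_ideal (word w).
Proof.
by case/has_e_pair_count=> [x [j [m [j' [y [wt0_m ->]]]]]]; apply: eBAeB_ideal_e_pair.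
Qed.

Lemma eBAeB_ideal_Lhom m phi : [pchar k] =i pred0 -> is_Lhom m phi ->
  m <> 0%N -> m <> 2%N -> forall i, (i <= m)%N -> eBAeB_ideal (phi i).
Proof.
move=> char0 phi_hom m_neq0 m_neq2; elim=> [|i IHi] le_im.
  have [phi0_fin phi0_h _ _] := phi_hom 0%N le_im.
  apply: ideal_gen_finsupp phi0_fin _ => u phi0u_neq0.
  apply: eBAeB_ideal_heavy_word.
  (* 2 (#e - #f) = m with m <> 0, 2 forces #e >= #f + 2, and rules out odd m. *)
  have := phi0_h u; rewrite act_h muln0 subr0 => /(mulIf phi0u_neq0).
  move/eqP; rewrite subr_eq -natrD => /eqP /(pchar0_natr_inj char0); lia.
have [_ _ phi_f _] := phi_hom i (ltnW le_im).
apply: (id_ext _ (ideal_gen_act (@sm_act _ _ _ _) iF (IHi (ltnW le_im)))) => w.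
by rewrite phi_f le_im.
Qed.

End TensorAlgebra.

Unset Implicit Arguments.

Theorem proposition4p1 (k : fieldType) (I J : eqType) :
  [pchar k] =i pred0 ->
  forall p : series k I J,
    tkk_ideal p <-> ideal_gen (submod_gen (@eBAeB k I J)) p.
Proof.
move=> char0 p; split; apply: ideal_gen_sub => q.
  case=> m [m_neq0 m_neq2]; apply: lin_span_ideal_gen => _ [phi [phi_hom [i le_im ->]]].
  exact: eBAeB_ideal_Lhom char0 phi_hom m_neq0 m_neq2 i le_im.
by move=> Mq; apply: id_gen; exists 4%N; split=> //; apply: submod_eBAeB_isotypic4.
Qed.
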